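(* Consider the family of binary symmetric channels with crossover probability $\theta\in[0,1]$, so that $P_\theta(\mathbf y|\mathbf x)=\theta^{d(\mathbf x,\mathbf y)}(1-\theta)^{N-d(\mathbf x,\mathbf y)}$ for $\mathbf x,\mathbf y\in\{0,1\}^N$. Fix $\xi\in[0,1]$ and let $f(\mathbf x,\mathbf y)=\max_{0\le\theta\le1}\left[\frac1N\ln P_\theta(\mathbf y|\mathbf x)+\xi E_r^*(\theta)\right]$, and $\rho(\mathbf x,\mathbf y)=\min\{\delta(\mathbf x,\mathbf y),1-\delta(\mathbf x,\mathbf y)\}$. Then for every $\mathbf y\in\{0,1\}^N$ and all $\mathbf x_1,\mathbf x_2\in\{0,1\}^N$, $f(\mathbf x_1,\mathbf y)\ge f(\mathbf x_2,\mathbf y)$ if and only if $\rho(\mathbf x_1,\mathbf y)\le\rho(\mathbf x_2,\mathbf y)$. Consequently, the minimax decision rule (choose the codeword maximizing $f$) is equivalent to the rule choosing the codeword minimizing $\rho$.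
   Context: $d(\mathbf x,\mathbf y)$ is the Hamming distance and $\delta(\mathbf x,\mathbf y)=d(\mathbf x,\mathbf y)/N$. $E_r^*(\theta)=\max_{0\le\rho\le1}\{\rho\ln2-(1+\rho)\ln[(1-\theta)^{1/(1+\rho)}+\theta^{1/(1+\rho)}]-\rho R\}$ is the random coding error exponent of ML decoding for the BSC at rate $R$ (symmetric about $\theta=1/2$). *)

From HB Require Import structures.
From mathcomp Require Import all_boot all_order all_algebra.
From mathcomp Require Import all_classical all_reals all_analysis.
Set Implicit Arguments. Unset Strict Implicit. Unset Printing Implicit Defensive.
Import Order.TTheory GRing.Theory Num.Theory.
Local Open Scope classical_set_scope.
Local Open Scope ring_scope.

Section BSC.
Variable R : realType.

Definition word (N : nat) := {ffun 'I_N -> bool}.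

Definition hamming (N : nat) (x y : word N) : nat := #|[set i | x i != y i]|.

Definition reldist (N : nat) (x y : word N) : R := (hamming x y)%:R / N%:R.

Definition Pbsc (N : nat) (theta : R) (x y : word N) : R :=
  theta ^+ hamming x y * (1 - theta) ^+ (N - hamming x y).

Definition lnE (p : R) : \bar R := if p == 0 then -oo%E else (ln p)%:E.

Definition Er (Rt theta : R) : R :=
  sup [set rho * ln 2 - (1 + rho) * ln ((1 - theta) `^ (1 + rho)^-1 + theta `^ (1 + rho)^-1)
           - rho * Rt | rho in `[0, 1]].

Definition fmm (N : nat) (xi Rt : R) (x y : word N) : \bar R :=
  ereal_sup [set (lnE (Pbsc theta x y) * (N%:R^-1)%:E + (xi * Er Rt theta)%:E)%E
            | theta in `[0, 1]].

Definition rhodist (N : nat) (x y : word N) : R :=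
  Num.min (reldist x y) (1 - reldist x y).

End BSC.

(* f(x, y) depends on the words only through d = d(x, y), as
   F(d) = sup_t [ln (t^d (1 - t)^(N - d)) / N + xi E_r(t)].  Since E_r(1 - t) = E_r(t), F(d) = F(N - d),
   so it suffices to show that F strictly decreases on 0 <= d <= N/2.  For d < e <= N/2 every term of
   F(e) lies below F(d) by a uniform margin: for small t the factor (t / (1 - t))^(e - d) < 1 gives it;
   for the remaining t <= 1/2 both the likelihood of d, past its mode d/N, and E_r, which decreases on [0, 1/2]
   because t^s + (1 - t)^s increases there by concavity of x^s, are dominated by their values at d/N;
   and t > 1/2 reflects to 1 - t.  The margin turns the inequality between suprema into a strict one. *)

From HB Require Import structures.
From mathcomp Require Import all_boot all_order all_algebra.
From mathcomp Require Import all_classical all_reals all_analysis.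
From mathcomp Require Import ring lra zify.
Import Order.TTheory GRing.Theory Num.Theory.
Local Open Scope classical_set_scope.
Local Open Scope ring_scope.
Set Implicit Arguments. Unset Strict Implicit.

Section PowerSums.
Variable R : realType.
Implicit Types s l u v a b x : R.

(* concavity of [x `^ s], read off the convexity of its inverse [x `^ s^-1] *)
Lemma powR_conv_le s l u v : 0 < s <= 1 -> 0 <= l <= 1 -> 0 <= u -> 0 <= v ->
  l * u `^ s + (1 - l) * v `^ s <= (l * u + (1 - l) * v) `^ s.
Proof.
move=> /andP[s0 s1] /andP[l0 l1] u0 v0.
have s0' : s != 0 by rewrite gt_eqF.
have : 1 <= s^-1 by rewrite invf_ge1.
move=> /convex_powR /(_ (Itv01 l0 l1) (u `^ s) (v `^ s)).
rewrite !inE /= !in_itv /= !andbT !powR_ge0 => /(_ isT isT).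
rewrite !(@convRE R) /= /unstable.onem -!powRrM !mulfV // !powRr1 // => leX.
set Y := l * u `^ s + _.
have Y0 : 0 <= Y by rewrite addr_ge0 // mulr_ge0 ?powR_ge0 ?subr_ge0.
have -> : Y = (Y `^ s^-1) `^ s by rewrite -powRrM mulVf // powRr1.
apply: ge0_ler_powR leX; first exact: ltW.
- by rewrite nnegrE powR_ge0.
- by rewrite nnegrE addr_ge0 // mulr_ge0 // subr_ge0.
Qed.

Lemma powR_sum_compl_le s a b : 0 < s <= 1 -> 0 <= a -> a <= b -> b <= 2^-1 ->
  a `^ s + (1 - a) `^ s <= b `^ s + (1 - b) `^ s.
Proof.
move=> s01 a0 ab b2.
have [->|/eqP neq_ab] := eqVneq a b; first by [].
(* [b] and [1 - b] are the convex combinations of [a] and [1 - a] with weights [l, 1 - l] *)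
set l := (1 - a - b) / (1 - 2 * a).
have l01 : 0 <= l <= 1.
  apply/andP; split; first by rewrite divr_ge0 //; lra.
  by rewrite ler_pdivrMr ?mul1r; lra.
have bE : b = l * a + (1 - l) * (1 - a) by rewrite /l; field; lra.
have b'E : 1 - b = l * (1 - a) + (1 - l) * a by rewrite /l; field; lra.
have a1 : 0 <= 1 - a by lra.
have := powR_conv_le s01 l01 a0 a1; have := powR_conv_le s01 l01 a1 a0.
rewrite -bE -b'E; lra.
Qed.

Lemma powR_sum_compl_ge1 s x : 0 < s <= 1 -> 0 <= x <= 1 -> 1 <= (1 - x) `^ s + x `^ s.
Proof.
move=> /andP[_ s1] /andP[x0 x1].
have le_powR y : 0 <= y <= 1 -> y <= y `^ s.
  case/andP; rewrite le_eqVlt => /predU1P[<- _|y0 y1]; first exact: powR_ge0.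
  by apply: ger1_powR; rewrite ?y0.
have := le_powR x; have := le_powR (1 - x).
by rewrite x0 x1 /=; lra.
Qed.

End PowerSums.

Section RandomCodingExponent.
Variable R : realType.
Variable Rt : R.
Hypothesis Rt0 : 0 <= Rt.
Implicit Types theta rho a b : R.

Definition Er_term theta rho : R :=
  rho * ln 2 - (1 + rho) * ln ((1 - theta) `^ (1 + rho)^-1 + theta `^ (1 + rho)^-1)
  - rho * Rt.

Lemma ErE theta : Er Rt theta = sup [set Er_term theta rho | rho in `[0, 1]].
Proof. by []. Qed.

Lemma inv1D_in01 rho : 0 <= rho -> 0 < (1 + rho)^-1 <= 1.
Proof. by move=> rho0; rewrite invr_gt0 invf_le1; lra. Qed.

Lemma Er_term_le_ln2 theta rho : 0 <= theta <= 1 -> 0 <= rho <= 1 ->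
  Er_term theta rho <= ln 2.
Proof.
move=> theta01 /andP[rho0 rho1]; rewrite /Er_term.
have /ln_ge0 := powR_sum_compl_ge1 (inv1D_in01 rho0) theta01.
have : 0 <= ln (2 : R) by rewrite ln_ge0 //; lra.
have : 0 <= rho * Rt by rewrite mulr_ge0.
nra.
Qed.

Lemma Er_terms_neq0 theta : [set Er_term theta rho | rho in `[(0 : R), 1]] !=set0.
Proof. by exists (Er_term theta 0), 0 => //=; rewrite in_itv /= lexx ler01. Qed.

Lemma has_sup_Er_terms theta : 0 <= theta <= 1 ->
  has_sup [set Er_term theta rho | rho in `[(0 : R), 1]].
Proof.
move=> theta01; split; first exact: Er_terms_neq0.
exists (ln 2) => _ [rho rho01 <-]; exact: Er_term_le_ln2.
Qed.

Lemma Er_le_ln2 theta : 0 <= theta <= 1 -> Er Rt theta <= ln 2.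
Proof.
move=> theta01; rewrite ErE; apply: ge_sup; first exact: Er_terms_neq0.
by move=> _ [rho rho01 <-]; exact: Er_term_le_ln2.
Qed.

Lemma Er_compl theta : Er Rt (1 - theta) = Er Rt theta.
Proof.
rewrite !ErE; congr sup; apply: eq_imagel => rho _.
by rewrite /Er_term subKr [_ + theta `^ _]addrC.
Qed.

Lemma Er_le_half a b : 0 <= a -> a <= b -> b <= 2^-1 -> Er Rt b <= Er Rt a.
Proof.
move=> a0 ab b2.
have a01 : 0 <= a <= 1 by apply/andP; split; lra.
rewrite [Er _ b]ErE; apply: ge_sup; first exact: Er_terms_neq0.
move=> _ [rho rho01 <-]; apply: le_trans (sup_upper_bound (has_sup_Er_terms a01) _); last first.
  by exists rho.
move: rho01; rewrite /= in_itv /= => /andP[rho0 _].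
have s01 := inv1D_in01 rho0.
rewrite /Er_term.
set ga := (1 - a) `^ _ + _; set gb := (1 - b) `^ _ + _.
have ga1 : 1 <= ga := powR_sum_compl_ge1 s01 a01.
have le_ga_gb : ga <= gb.
  by rewrite /ga /gb addrC [X in _ <= X]addrC; apply: powR_sum_compl_le.
have : ln ga <= ln gb by rewrite ler_ln ?posrE; lra.
have : 0 < 1 + rho by lra.
nra.
Qed.

End RandomCodingExponent.

Section Likelihood.
Variable R : realType.
Implicit Types (N d e : nat) (m n t s a b x : R).

Definition lik N d t : R := t ^+ d * (1 - t) ^+ (N - d).

Lemma lik_ge0 N d t : 0 <= t <= 1 -> 0 <= lik N d t.
Proof. by case/andP=> t0 t1; rewrite mulr_ge0 // exprn_ge0 // subr_ge0. Qed.

Lemma lik_le1 N d t : 0 <= t <= 1 -> lik N d t <= 1.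
Proof.
by case/andP=> t0 t1; rewrite mulr_ile1 ?exprn_ge0 ?exprn_ile1 ?subr_ge0 //; lra.
Qed.

Lemma lik_compl N d t : (d <= N)%N -> lik N d t = lik N (N - d) (1 - t).
Proof. by move=> dN; rewrite /lik subKn // subKr mulrC. Qed.

Lemma lik_le_compl N d t : (d + d <= N)%N -> 2^-1 <= t <= 1 ->
  lik N d t <= lik N d (1 - t).
Proof.
move=> ddN /andP[t2 t1]; rewrite /lik subKr.
have -> : (N - d = d + (N - d - d))%N by lia.
rewrite !exprD mulrA [X in _ <= X]mulrA [X in _ <= X * _]mulrC.
apply: ler_wpM2l; first by rewrite mulr_ge0 // exprn_ge0 //; lra.
by apply: lerXn2r; rewrite ?nnegrE; lra.
Qed.

Lemma lik_le_ratio N d d' t s : (d <= d')%N -> (d' <= N)%N -> 0 <= t -> t <= s -> s < 1 ->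
  lik N d' t <= (s / (1 - s)) ^+ (d' - d) * lik N d t.
Proof.
move=> dd' d'N t0 ts s1; rewrite /lik.
have -> : (N - d = (N - d') + (d' - d))%N by lia.
rewrite -{1}(subnKC dd') !exprD.
have le_t : t <= s / (1 - s) * (1 - t) by rewrite mulrAC ler_pdivlMr; nra.
have : t ^+ (d' - d) <= (s / (1 - s)) ^+ (d' - d) * (1 - t) ^+ (d' - d).
  by rewrite -exprMn; apply: lerXn2r; rewrite ?nnegrE //; apply: le_trans le_t.
have : 0 <= t ^+ d * (1 - t) ^+ (N - d') by rewrite mulr_ge0 // exprn_ge0 //; lra.
set A := t ^+ d; set B := (1 - t) ^+ (N - d'); set C := t ^+ (d' - d).
set D := (1 - t) ^+ (d' - d); set K := (s / (1 - s)) ^+ (d' - d).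
have -> : A * C * B = (A * B) * C by ring.
have -> : K * (A * (B * D)) = (A * B) * (K * D) by ring.
by move=> AB0 leC; apply: ler_wpM2l.
Qed.

Lemma lik_le_half N d d' t : (d <= d')%N -> (d' <= N)%N -> 0 <= t -> t <= 2^-1 ->
  lik N d' t <= lik N d t.
Proof.
move=> dd' d'N t0 t2.
apply: le_trans (lik_le_ratio dd' d'N t0 (lexx t) _) _; first lra.
apply: ler_piMl; first by apply: lik_ge0; apply/andP; split; lra.
apply: exprn_ile1; first by rewrite divr_ge0 //; lra.
by rewrite ler_pdivrMr; lra.
Qed.

Lemma lik_gt0 N d a : (0 < N)%N -> d%:R / N%:R <= a -> a < 1 -> 0 < lik N d a.
Proof.
move=> N0 da a1; have a0 : 0 <= a by apply: le_trans da; rewrite divr_ge0.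
apply: mulr_gt0; last by rewrite exprn_gt0 ?subr_gt0.
case: d da => [|d] da; first by rewrite expr0.
by rewrite exprn_gt0 // (lt_le_trans _ da) // divr_gt0 ?ltr0n.
Qed.

Lemma ln_le_subr1 x : 0 < x -> ln x <= x - 1.
Proof. by move=> x0; have := expR_ge1Dx (ln x); rewrite lnK //; lra. Qed.

Lemma ln_lt_subr1 x : 0 < x -> x != 1 -> ln x < x - 1.
Proof.
move=> x0 x1; have /expR_gt1Dx : ln x != 0 by rewrite ln_eq0.
by rewrite lnK //; lra.
Qed.

Lemma ln_ratios_lt0 m n a b : 0 <= m -> 0 < n -> 0 < a -> a < b -> b < 1 ->
  m * (1 - a) <= n * a -> m * ln (b / a) + n * ln ((1 - b) / (1 - a)) < 0.
Proof.
move=> m0 n0 a0 ab b1 mn.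
have a1 : 0 < 1 - a by lra.
have u_le : a * ln (b / a) <= b - a.
  have -> : b - a = a * (b / a - 1) by field; rewrite gt_eqF.
  by rewrite ler_pM2l // ln_le_subr1 // divr_gt0 //; lra.
have v_lt : (1 - a) * ln ((1 - b) / (1 - a)) < a - b.
  have -> : a - b = (1 - a) * ((1 - b) / (1 - a) - 1) by field; rewrite gt_eqF.
  rewrite ltr_pM2l // ln_lt_subr1 ?divr_gt0 ?subr_gt0 //; first lra.
  by rewrite lt_eqF // ltr_pdivrMr // mul1r; lra.
(* multiplied by a (1 - a), the sum is below (b - a) (m (1 - a) - n a) <= 0 *)
have aa1 : 0 < a * (1 - a) by apply: mulr_gt0; lra.
rewrite -(pmulr_rlt0 _ aa1).
set u := ln (b / a) in u_le *; set v := ln ((1 - b) / (1 - a)) in v_lt *.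
have : m * (1 - a) * (a * u) <= m * (1 - a) * (b - a).
  by rewrite ler_wpM2l // mulr_ge0 //; lra.
have : n * a * ((1 - a) * v) < n * a * (a - b) by rewrite ltr_pM2l ?mulr_gt0.
have : (b - a) * (m * (1 - a)) <= (b - a) * (n * a) by rewrite ler_wpM2l //; lra.
nra.
Qed.

Lemma lik_lt_beyond_mode N d a b : (d < N)%N -> d%:R / N%:R <= a -> a < b -> b <= 1 ->
  lik N d b < lik N d a.
Proof.
move=> dN da ab b1; have N0 : (0 < N)%N by lia.
have a1 : a < 1 by lra.
have lik_a0 := lik_gt0 N0 da a1.
have [->|/eqP b1'] := eqVneq b 1.
  by rewrite /lik subrr expr0n subn_eq0 leqNgt dN mulr0.
have {b1'}b1 : b < 1 by lra.
have a0 : 0 <= a by apply: le_trans da; rewrite divr_ge0.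
case: d dN da lik_a0 => [|d] dN da lik_a0.
  by rewrite /lik !expr0 !mul1r subn0 ltrXn2r //; [lia | lra | lra].
have a0' : 0 < a by apply: lt_le_trans da; rewrite divr_gt0 // ltr0n.
have ln_lik t : 0 < t < 1 -> ln (lik N d.+1 t) = d.+1%:R * ln t + (N - d.+1)%:R * ln (1 - t).
  by case/andP=> t0 t1; rewrite lnM ?posrE ?exprn_gt0 ?subr_gt0 // !lnXn ?subr_gt0 // !mulr_natl.
have lik_b0 : 0 < lik N d.+1 b by apply: lik_gt0 => //; lra.
rewrite -ltr_ln ?posrE // !ln_lik ?a0' ?b1 ?a1 //=; last by lra.
have : d.+1%:R * (1 - a) <= (N - d.+1)%:R * a.
  by move: da; rewrite ler_pdivrMr ?ltr0n // natrB 1?ltnW //; lra.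
move/(ln_ratios_lt0 (ler0n _ _) (_ : 0 < (N - d.+1)%:R) a0' ab b1).
rewrite ltr0n subn_gt0 => /(_ dN).
rewrite !ln_div ?posrE ?subr_gt0 //; lra.
Qed.

End Likelihood.

Section MinimaxMetric.
Variable R : realType.
Variables (N : nat) (xi Rt : R).
Hypotheses (N0 : (0 < N)%N) (xi0 : 0 <= xi) (Rt0 : 0 <= Rt).
Implicit Types (d e : nat) (t k : R).

Let N_gt0 : 0 < (N%:R : R). Proof. by rewrite ltr0n. Qed.

Definition fmm_term d t : \bar R :=
  (lnE (lik N d t) * (N%:R^-1)%:E + (xi * Er Rt t)%:E)%E.

Definition fmm_dist d : \bar R := ereal_sup [set fmm_term d t | t in `[0, 1]].

Lemma fmmE (x y : word N) : fmm xi Rt x y = fmm_dist (hamming x y).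
Proof. by []. Qed.

Lemma fmm_term_lik0 d t : lik N d t = 0 -> fmm_term d t = -oo%E.
Proof.
by move=> lik0; rewrite /fmm_term /lnE lik0 eqxx gt0_mulNye ?lte_fin ?invr_gt0.
Qed.

Lemma fmm_termE d t : 0 < lik N d t ->
  fmm_term d t = (ln (lik N d t) / N%:R + xi * Er Rt t)%:E.
Proof. by move=> lik0; rewrite /fmm_term /lnE gt_eqF. Qed.

Lemma fmm_term_le_dist d t : 0 <= t <= 1 -> (fmm_term d t <= fmm_dist d)%E.
Proof. by move=> t01; apply: ereal_sup_ubound; exists t; rewrite //= in_itv. Qed.

Lemma fmm_term_le_ln2 d t : 0 <= t <= 1 -> (fmm_term d t <= (xi * ln 2)%:E)%E.
Proof.
move=> t01; have [lik0|lik_neq0] := eqVneq (lik N d t) 0.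
  by rewrite fmm_term_lik0 ?leNye.
have lik_gt0 : 0 < lik N d t by rewrite lt_neqAle eq_sym lik_neq0 lik_ge0.
rewrite fmm_termE // lee_fin.
have : ln (lik N d t) / N%:R <= 0.
  by rewrite pmulr_lle0 ?invr_gt0 // ln_le0 // lik_le1.
have : xi * Er Rt t <= xi * ln 2 by rewrite ler_wpM2l // Er_le_ln2.
lra.
Qed.

Lemma fmm_dist_fin d t : 0 <= t <= 1 -> 0 < lik N d t -> fmm_dist d \is a fin_num.
Proof.
move=> t01 lik_gt0; rewrite fin_numElt.
have := fmm_term_le_dist d t01; rewrite fmm_termE // => lb.
have ub : (fmm_dist d <= (xi * ln 2)%:E)%E.
  by apply: ge_ereal_sup => _ [s s01 <-]; apply: fmm_term_le_ln2; move: s01; rewrite /= in_itv.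
by rewrite (lt_le_trans _ lb) ?ltNyr // (le_lt_trans ub) ?ltry.
Qed.

Lemma fmm_dist_compl d : (d <= N)%N -> fmm_dist d = fmm_dist (N - d).
Proof.
move=> dN; have termE t : fmm_term d t = fmm_term (N - d) (1 - t).
  by rewrite /fmm_term (lik_compl t dN) Er_compl.
apply/le_anti/andP; split; apply: ge_ereal_sup => _ [t + <-];
  rewrite /= in_itv /= => /andP[t0 t1].
- by rewrite termE; apply: fmm_term_le_dist; apply/andP; split; lra.
- rewrite -[t](subKr 1) -termE; apply: fmm_term_le_dist; apply/andP; split; lra.
Qed.

Lemma fmm_term_le_shift d e t t' k : 0 < k -> 0 <= t <= 1 ->
    lik N e t <= k * lik N d t' -> Er Rt t <= Er Rt t' ->
  (fmm_term e t <= fmm_term d t' + (ln k / N%:R)%:E)%E.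
Proof.
move=> k0 t01 le_lik le_Er.
have [lik0|lik_neq0] := eqVneq (lik N e t) 0; first by rewrite fmm_term_lik0 ?leNye.
have lik_e_gt0 : 0 < lik N e t by rewrite lt_neqAle eq_sym lik_neq0 lik_ge0.
have lik_d_gt0 : 0 < lik N d t'.
  by rewrite -(pmulr_rgt0 _ k0); apply: lt_le_trans le_lik.
rewrite !fmm_termE // -EFinD lee_fin.
have le_ln : ln (lik N e t) / N%:R <= ln (lik N d t') / N%:R + ln k / N%:R.
  rewrite -mulrDl ler_pM2r ?invr_gt0 // -lnM ?posrE // mulrC.
  by rewrite ler_ln ?posrE // mulr_gt0.
have le_xiEr : xi * Er Rt t <= xi * Er Rt t' by rewrite ler_wpM2l.
by rewrite -addrA [xi * _ + _]addrC addrA lerD.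
Qed.

Lemma fmm_term_half_margin d e : (d < e)%N -> (e + e <= N)%N ->
  exists2 k, 0 < k < 1 & forall t, 0 <= t <= 2^-1 ->
    (fmm_term e t <= fmm_dist d + (ln k / N%:R)%:E)%E.
Proof.
move=> de eeN; have eN : (e <= N)%N by lia.
have dN : (d < N)%N by lia.
set m : R := d%:R / N%:R.
have m0 : 0 <= m by rewrite divr_ge0.
have m2 : m < 2^-1.
  have : ((d + d)%:R : R) < N%:R by rewrite ltr_nat; lia.
  by rewrite natrD /m ltr_pdivrMr //; lra.
(* below [s] the factor [(t / (1 - t)) ^+ (e - d)] gives the margin; above it the
   likelihood of [d], already past its mode [m], does *)
set s : R := (m + 2^-1) / 2.
have [ms s2 s0 s1] : [/\ m < s, s < 2^-1, 0 < s & s < 1] by rewrite /s; split; lra.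
have lik_m_gt0 : 0 < lik N d m by apply: lik_gt0 => //; lra.
set k1 : R := (s / (1 - s)) ^+ (e - d).
have k1_01 : 0 < k1 < 1.
  have q01 : 0 < s / (1 - s) < 1 by rewrite divr_gt0 ?ltr_pdivrMr ?mul1r; lra.
  rewrite exprn_gt0 ?exprn_ilt1 -?lt0n ?subn_gt0 //; lra.
set k2 : R := lik N d s / lik N d m.
have k2_01 : 0 < k2 < 1.
  have lik_s_gt0 : 0 < lik N d s := lik_gt0 N0 (ltW ms) s1.
  rewrite divr_gt0 //= ltr_pdivrMr // mul1r; exact: lik_lt_beyond_mode dN (lexx m) ms (ltW s1).
exists (Num.max k1 k2); first by rewrite lt_max gt_max; lra.
have kmax_gt0 : 0 < Num.max k1 k2 by rewrite lt_max; lra.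
have shift t t' k : 0 <= t <= 1 -> 0 <= t' <= 1 -> k <= Num.max k1 k2 ->
    lik N e t <= k * lik N d t' -> Er Rt t <= Er Rt t' ->
    (fmm_term e t <= fmm_dist d + (ln (Num.max k1 k2) / N%:R)%:E)%E.
  move=> t01 t'01 kk le_lik le_Er.
  apply: le_trans (fmm_term_le_shift kmax_gt0 t01 _ le_Er) _.
    by apply: le_trans le_lik _; apply: ler_wpM2r kk; exact: lik_ge0.
  by apply: leeD; first exact: fmm_term_le_dist.
move=> t /andP[t0 t2]; have t01 : 0 <= t <= 1 by apply/andP; split; lra.
have [ts|st] := leP t s.
  apply: (shift t t k1) => //; first by rewrite le_max lexx.
  exact: lik_le_ratio (ltnW de) eN t0 ts s1.
have m01 : 0 <= m <= 1 by rewrite m0 /=; lra.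
have mt : m < t by lra.
apply: (shift t m k2 t01 m01); first by rewrite le_max lexx orbT.
- rewrite /k2 mulfVK ?gt_eqF //.
  apply: le_trans (lik_le_half (ltnW de) eN t0 t2) _.
  by apply/ltW/(lik_lt_beyond_mode dN (ltW ms) st); lra.
- exact: Er_le_half m0 (ltW mt) t2.
Qed.

Lemma fmm_term_margin d e : (d < e)%N -> (e + e <= N)%N ->
  exists2 k, 0 < k < 1 & forall t, 0 <= t <= 1 ->
    (fmm_term e t <= fmm_dist d + (ln k / N%:R)%:E)%E.
Proof.
move=> de eeN; have [k k01 half] := fmm_term_half_margin de eeN.
exists k => // t /andP[t0 t1]; have [t2|t2] := leP t 2^-1; first by apply: half; rewrite t0.
apply: le_trans (half (1 - t) _); last by apply/andP; split; lra.
have := @fmm_term_le_shift e e t (1 - t) 1 ltr01.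
rewrite ln1 mul0r adde0 Er_compl mul1r; apply => //; first by rewrite t0.
by apply: lik_le_compl => //; rewrite (ltW t2).
Qed.

Lemma fmm_dist_lt d e : (d < e)%N -> (e + e <= N)%N -> (fmm_dist e < fmm_dist d)%E.
Proof.
move=> de eeN; have [k /andP[k0 k1] margin] := fmm_term_margin de eeN.
have ub : (fmm_dist e <= fmm_dist d + (ln k / N%:R)%:E)%E.
  by apply: ge_ereal_sup => _ [t + <-]; rewrite /= in_itv /=; apply: margin.
have m01 : 0 <= (d%:R / N%:R : R) <= 1.
  by rewrite divr_ge0 //= ler_pdivrMr // mul1r ler_nat; lia.
have : fmm_dist d \is a fin_num.
  by apply: (fmm_dist_fin m01); apply: lik_gt0 => //; rewrite ltr_pdivrMr // mul1r ltr_nat; lia.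
case: (fmm_dist d) ub => [r ub _| |] //; apply: le_lt_trans ub _.
by rewrite -EFinD lte_fin gtrDl pmulr_llt0 ?invr_gt0 // ln_lt0 ?k0.
Qed.

Lemma fmm_dist_le d e : (d + d <= N)%N -> (e + e <= N)%N ->
  (fmm_dist e <= fmm_dist d)%E <-> (d <= e)%N.
Proof.
move=> ddN eeN; split=> [le_de|].
  by rewrite leqNgt; apply: contraTN le_de => /fmm_dist_lt /(_ ddN); rewrite -ltNge.
rewrite leq_eqVlt => /predU1P[-> //|lt_de].
exact/ltW/fmm_dist_lt.
Qed.

Lemma fmm_dist_minn d : (d <= N)%N -> fmm_dist d = fmm_dist (minn d (N - d)).
Proof. by move=> dN; case: leqP => // _; apply: fmm_dist_compl. Qed.

End MinimaxMetric.

Lemma hamming_le N (x y : word N) : (hamming x y <= N)%N.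
Proof. by rewrite /hamming (leq_trans (max_card _)) ?card_ord. Qed.

Lemma rhodistE (R : realType) N (x y : word N) : (0 < N)%N ->
  rhodist R x y = (minn (hamming x y) (N - hamming x y))%:R / N%:R.
Proof.
move=> N0; have N_neq0 : (N%:R : R) != 0 by rewrite pnatr_eq0 -lt0n.
rewrite /rhodist /reldist [1 - _](_ : _ = (N - hamming x y)%:R / N%:R); last first.
  by rewrite natrB ?hamming_le // mulrBl divff.
case: leqP => h; [apply/min_idPl | apply/min_idPr];
  by rewrite ler_pM2r ?invr_gt0 ?ltr0n // ler_nat // ltnW.
Qed.

Unset Implicit Arguments.
Set Strict Implicit.

Theorem mainTheorem6 (R : realType) (N : nat) (xi Rt : R) :
  (0 < N)%N -> 0 <= xi <= 1 -> 0 <= Rt ->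
  (forall y x1 x2 : word N,
      (fmm xi Rt x2 y <= fmm xi Rt x1 y)%E <-> rhodist R x1 y <= rhodist R x2 y) /\
  (forall (C : seq (word N)) (y x : word N), x \in C ->
      (forall x', x' \in C -> (fmm xi Rt x' y <= fmm xi Rt x y)%E) <->
      (forall x', x' \in C -> rhodist R x y <= rhodist R x' y)).
Proof.
move=> N0 /andP[xi0 _] Rt0.
have fmm_le_iff (y x1 x2 : word N) :
    (fmm xi Rt x2 y <= fmm xi Rt x1 y)%E <-> rhodist R x1 y <= rhodist R x2 y.
  rewrite !fmmE !rhodistE // !(fmm_dist_minn xi Rt (hamming_le _ _)).
  by rewrite ler_pM2r ?invr_gt0 ?ltr0n // ler_nat; apply: fmm_dist_le => //; lia.
by split=> // C y x _; split=> le_all x' /le_all /fmm_le_iff.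
Qed.
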